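(* Let $k$ be a field, $S=k[x_1,\dots,x_n]$, $\mathfrak m=(x_1,\dots,x_n)$, $I=(f_1,\dots,f_r)$ a linearly presented $\mathfrak m$-primary ideal, $B=k[T_1,\dots,T_r]$, $J\subseteq B[x_1,\dots,x_n]$ the defining ideal of $\mathrm{Sym}(I)$ with minimal generators $L_1,\dots,L_N$, and $\Theta$ the Jacobian dual ($N\times n$ matrix of linear forms in the $T$'s with $\Theta(x_1,\dots,x_n)^T=(L_1,\dots,L_N)^T$). Let $N'$ be the $(n-1)\times n$ submatrix of $\Theta$ consisting of the rows corresponding to $L_{i_1},\dots,L_{i_{n-1}}$, and for $1\le i\le n$ let $\Delta_i=(-1)^i\det N'^{(i)}$, where $N'^{(i)}$ is $N'$ with its $i$-th column deleted. If $\Delta_i\ne0$ for some $i$, then (1) $\Delta_iJ\subseteq(L_{i_1},\dots,L_{i_{n-1}})+I_n(\Theta)B[x_1,\dots,x_n]$; (2) in the ring $B[x_1,\dots,x_n]$ localized by inverting $\Delta_i$, the ideal generated by $L_{i_1},\dots,L_{i_{n-1}}$ equals the ideal generated by the $2\times 2$ minors of $\begin{bmatrix}x_1&\cdots&x_n\\ \Delta_1&\cdots&\Delta_n\end{bmatrix}$.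
   Context: ''Linearly presented'' means $I$ is generated by forms of a common degree whose syzygy module is generated by linear syzygies $\sum_i a_i(\mathbf x)f_i=0$; $J$ is generated by the bilinear forms $\sum_i a_i(\mathbf x)T_i$ attached to these syzygies, and $L_1,\dots,L_N$ are minimal generators of $J$ (corresponding to minimal generators of the syzygy module). $I_n(\Theta)\subseteq B$ is the ideal of $n\times n$ minors of $\Theta$. *)

From HB Require Import structures.
From mathcomp Require Import all_boot all_order all_algebra.
From mathcomp Require Import fraction.
From mathcomp.multinomials Require Import mpoly.
Set Implicit Arguments. Unset Strict Implicit. Unset Printing Implicit Defensive.
Import Order.TTheory GRing.Theory.
Local Open Scope ring_scope.
Local Notation "x %:F" := (@FracField.tofrac _ x) : ring_scope.

Inductive ideal_in (R : comNzRingType) (A : R -> Prop) (G : R -> Prop) : R -> Prop :=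
  | ideal_in_gen g : G g -> ideal_in A G g
  | ideal_in_0 : ideal_in A G 0
  | ideal_in_add a b : ideal_in A G a -> ideal_in A G b -> ideal_in A G (a + b)
  | ideal_in_mul c a : A c -> ideal_in A G a -> ideal_in A G (c * a).

Definition ideal_gen (R : comNzRingType) (G : R -> Prop) : R -> Prop :=
  ideal_in (fun _ => True) G.

(* The localization R_d = R[1/d] of a domain R, realized inside Frac(R). *)
Definition loc_ring (R : idomainType) (d : R) : {fraction R} -> Prop :=
  fun z => exists (a : R) (t : nat), z = a%:F / (d ^+ t)%:F.

Definition loc_ideal (R : idomainType) (d : R) (G : R -> Prop) : {fraction R} -> Prop :=
  ideal_in (loc_ring d) (fun z => exists2 g, G g & z = g%:F).

Definition max_homog (k : fieldType) (n : nat) : {mpoly k[n]} -> Prop :=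
  ideal_gen (fun p => exists i : 'I_n, p = 'X_i).

Definition m_primary (k : fieldType) (n : nat) (I : {mpoly k[n]} -> Prop) : Prop :=
  [/\ ~ I 1,
      (forall a b, I (a * b) -> I a \/ exists e : nat, I (b ^+ e)) &
      (forall g, (exists e : nat, I (g ^+ e)) <-> max_homog g)].

Definition syzygy (k : fieldType) (n r : nat) (f : 'I_r -> {mpoly k[n]})
  (a : 'I_r -> {mpoly k[n]}) : Prop := \sum_(i < r) a i * f i = 0.

Definition linear_syzygy (k : fieldType) (n r : nat) (f : 'I_r -> {mpoly k[n]})
  (a : 'I_r -> {mpoly k[n]}) : Prop :=
  syzygy f a /\ forall i, a i \is 1.-homog.

Definition gens_syz (k : fieldType) (n r N : nat) (f : 'I_r -> {mpoly k[n]})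
  (A : 'I_N -> 'I_r -> {mpoly k[n]}) : Prop :=
  (forall j, syzygy f (A j)) /\
  forall a, syzygy f a ->
    exists c : 'I_N -> {mpoly k[n]}, forall i, a i = \sum_(j < N) c j * A j i.

Definition min_gens_syz (k : fieldType) (n r N : nat) (f : 'I_r -> {mpoly k[n]})
  (A : 'I_N -> 'I_r -> {mpoly k[n]}) : Prop :=
  gens_syz f A /\
  forall j0 : 'I_N, ~ (forall a, syzygy f a ->
    exists c : 'I_N -> {mpoly k[n]}, c j0 = 0 /\ forall i, a i = \sum_(j < N) c j * A j i).

Definition linearly_presented (k : fieldType) (n r : nat) (f : 'I_r -> {mpoly k[n]}) : Prop :=
  (exists d : nat, forall i, f i \is d.-homog) /\
  exists (M : nat) (A : 'I_M -> 'I_r -> {mpoly k[n]}),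
    (forall j, linear_syzygy f (A j)) /\ gens_syz f A.

(* The embedding S = k[x] -> B[x], B = k[T_1..T_r]. *)
Definition toBX (k : fieldType) (n r : nat) (p : {mpoly k[n]}) : {mpoly {mpoly k[r]}[n]} :=
  map_mpoly (mpolyC r (R := k)) p.

Definition bilin (k : fieldType) (n r : nat) (a : 'I_r -> {mpoly k[n]}) : {mpoly {mpoly k[r]}[n]} :=
  \sum_(i < r) toBX r (a i) * ('X_i : {mpoly k[r]})%:MP.

(* J : the defining ideal of Sym(I), generated by the bilinear forms of   *)
(* the linear syzygies.                                                   *)
Definition sym_ideal (k : fieldType) (n r : nat) (f : 'I_r -> {mpoly k[n]}) :
  {mpoly {mpoly k[r]}[n]} -> Prop :=
  ideal_gen (fun p => exists2 a, linear_syzygy f a & p = bilin a).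

Definition minors_ideal (R : comNzRingType) (N n : nat) (Th : 'M[R]_(N, n)) : R -> Prop :=
  ideal_gen (fun p => exists2 s : 'I_n -> 'I_N, injective s &
                        p = \det (\matrix_(a < n, b < n) Th (s a) b)).

(* Delta_i = (-1)^i det N'^(i) for the 1-based index i; here i : 'I_n is  *)
(* 0-based, so the sign is (-1)^(i+1). N' consists of rows sel 0..n-2.    *)
Definition Delta (R : comNzRingType) (N n : nat) (Th : 'M[R]_(N, n))
  (sel : 'I_n.-1 -> 'I_N) (i : 'I_n) : R :=
  (-1) ^+ (i.+1) * \det (\matrix_(a < n.-1, b < n.-1) Th (sel a) (lift i b)).

(* Border the (n-1) x n matrix N' by an extra last row v; Laplace expansion along
   that row gives det = ± sum_l v_l Delta_l.  With v a row of N' the determinant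
   vanishes, so (Delta_l) is a kernel vector of N'; with v = e_i, multiplying
   adj * Q = det Q by the vector x shows Delta_i x_l - Delta_l x_i lies in the
   ideal of the selected forms L_a = sum_b N'_ab x_b.  Hence
   Delta_i L_j = sum_b Theta_jb (Delta_i x_b - Delta_b x_i) + x_i sum_b Theta_jb Delta_b,
   where the last sum is, up to sign, an n x n minor of Theta (or 0).  The same
   identities, read after inverting Delta_i, give the two inclusions between the
   ideal of the selected forms and the ideal of 2 x 2 minors of [x; Delta]. *)

From HB Require Import structures.
From mathcomp Require Import all_boot all_order all_algebra.
From mathcomp Require Import fraction.
From mathcomp.multinomials Require Import mpoly.
From mathcomp Require Import ring.
Import GRing.Theory.
Local Open Scope ring_scope.
Set Implicit Arguments.
Unset Strict Implicit.
Unset Printing Implicit Defensive.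

Section IdealGen.
Variable R : comNzRingType.
Implicit Types (G H : R -> Prop) (y z : R).

Lemma ideal_in_sub (A : R -> Prop) G H z :
  (forall g, G g -> ideal_in A H g) -> ideal_in A G z -> ideal_in A H z.
Proof.
move=> GH; elim=> [g /GH //| | a b _ ha _ hb | c a Ac _ ha].
- exact: ideal_in_0.
- exact: ideal_in_add.
- exact: ideal_in_mul.
Qed.

Lemma ideal_gen_mul G c z : ideal_gen G z -> ideal_gen G (c * z).
Proof. exact: ideal_in_mul. Qed.

Lemma ideal_gen_add G y z : ideal_gen G y -> ideal_gen G z -> ideal_gen G (y + z).
Proof. exact: ideal_in_add. Qed.

Lemma ideal_gen_opp G z : ideal_gen G z -> ideal_gen G (- z).
Proof. by rewrite -mulN1r; apply: ideal_gen_mul. Qed.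

Lemma ideal_gen_sub G y z : ideal_gen G y -> ideal_gen G z -> ideal_gen G (y - z).
Proof. by move=> Gy Gz; apply/ideal_gen_add/ideal_gen_opp. Qed.

Lemma ideal_gen_sum G (I : finType) (F : I -> R) :
  (forall i, ideal_gen G (F i)) -> ideal_gen G (\sum_i F i).
Proof. by move=> GF; apply: big_ind => //; [apply: ideal_in_0 | apply: ideal_gen_add]. Qed.

Lemma ideal_gen_mul_sub G H d z :
  (forall h, H h -> ideal_gen G (d * h)) -> ideal_gen H z -> ideal_gen G (d * z).
Proof.
move=> GdH; elim=> [h /GdH //| | a b _ ha _ hb | c a _ _ ha].
- by rewrite mulr0; apply: ideal_in_0.
- by rewrite mulrDr; apply: ideal_gen_add.
- by rewrite mulrCA; apply: ideal_gen_mul.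
Qed.

End IdealGen.

Local Notation "x %:F" := (@FracField.tofrac _ x) : ring_scope.

Section Localization.
Variables (R : idomainType) (d : R).
Implicit Types (G : R -> Prop) (y : R).

Lemma loc_ideal_tofrac G y : ideal_gen G y -> loc_ideal d G y%:F.
Proof.
elim=> [g Gg | | a b _ ha _ hb | c a _ _ ha].
- by apply: ideal_in_gen; exists g.
- by rewrite tofrac0; apply: ideal_in_0.
- by rewrite tofracD; apply: ideal_in_add.
- rewrite tofracM; apply: ideal_in_mul => //.
  by exists c, 0%N; rewrite expr0 tofrac1 divr1.
Qed.

Lemma loc_ideal_tofrac_mull G y :
  d != 0 -> ideal_gen G (d * y) -> loc_ideal d G y%:F.
Proof.
move=> d_neq0 /loc_ideal_tofrac Gdy.
have -> : y%:F = 1%:F / (d ^+ 1)%:F * (d * y)%:F.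
  by rewrite tofracM mulrA expr1 mul1r mulVf ?mul1r ?tofrac_eq0.
by apply: ideal_in_mul => //; exists 1, 1%N.
Qed.

End Localization.

Lemma mul_form_cross_split (R : comNzRingType) (I : finType) (v x D : I -> R) d y :
  d * \sum_b v b * x b = \sum_b v b * (d * x b - D b * y) + y * \sum_b v b * D b.
Proof.
rewrite !mulr_sumr -big_split; apply: eq_bigr => b _ /=; ring.
Qed.

Section BorderedMinors.
Variables (R : comNzRingType) (N m : nat) (P : 'M[R]_(N, m.+1)) (sel : 'I_m -> 'I_N).
Local Notation D := (Delta P sel).

Definition border_mx (v : 'I_m.+1 -> R) : 'M[R]_m.+1 :=
  \matrix_(a, b) if unlift ord_max a is Some a' then P (sel a') b else v b.

Lemma border_mx_lift v a b : border_mx v (lift ord_max a) b = P (sel a) b.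
Proof. by rewrite mxE liftK. Qed.

Lemma border_mx_max v b : border_mx v ord_max b = v b.
Proof. by rewrite mxE unlift_none. Qed.

Lemma cofactor_border_mx v l : cofactor (border_mx v) ord_max l = (-1) ^+ m.+1 * D l.
Proof.
rewrite /cofactor /Delta mulrA -exprD addSn addnS !exprS !mulN1r opprK.
by congr (_ * \det _); apply/matrixP => a b; rewrite !mxE liftK.
Qed.

Lemma det_border_mx v : \det (border_mx v) = (-1) ^+ m.+1 * \sum_l v l * D l.
Proof.
rewrite (expand_det_row _ ord_max) mulr_sumr; apply: eq_bigr => l _.
by rewrite cofactor_border_mx border_mx_max mulrCA.
Qed.

Lemma sum_Delta_sel_row a : \sum_l P (sel a) l * D l = 0.
Proof.
rewrite -[LHS](signrMK m.+1) -det_border_mx.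
rewrite (@determinant_alternate _ _ _ (lift ord_max a) ord_max) ?mulr0 //.
  by rewrite eq_sym neq_lift.
by move=> b; rewrite border_mx_lift border_mx_max.
Qed.

Definition max_minors : R -> Prop :=
  fun p => exists2 s : 'I_m.+1 -> 'I_N, injective s & p = \det (\matrix_(a, b) P (s a) b).

Lemma sum_Delta_row_max_minors j : ideal_gen max_minors (\sum_l P j l * D l).
Proof.
rewrite -[X in ideal_gen _ X](signrMK m.+1) -det_border_mx; apply: ideal_gen_mul.
pose s a := if unlift ord_max a is Some a' then sel a' else j.
have -> : border_mx (P j) = \matrix_(a, b) P (s a) b.
  by apply/matrixP => a b; rewrite !mxE /s; case: unlift.
have [s_inj | /injectivePn [a1 [a2 a12 s12]]] := boolP (injectiveb s).
  by apply: ideal_in_gen; exists s => //; apply/injectiveP.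
rewrite (determinant_alternate a12); first exact: ideal_in_0.
by move=> b; rewrite !mxE s12.
Qed.

Variable x : 'I_m.+1 -> R.

Definition sel_forms : R -> Prop := fun p => exists a : 'I_m, p = \sum_b P (sel a) b * x b.

Lemma Delta_cross_sel_forms i l : ideal_gen sel_forms (D i * x l - D l * x i).
Proof.
pose Q := border_mx (fun b => (b == i)%:R).
pose X : 'cV_m.+1 := \col_b x b.
have QX k : (Q *m X) k 0 = \sum_b Q k b * x b.
  by rewrite mxE; apply: eq_bigr => b _; congr (_ * _); rewrite mxE.
have QX_max : (Q *m X) ord_max 0 = x i.
  rewrite QX (bigD1 i) //= big1 ?addr0; first by rewrite /Q border_mx_max eqxx mul1r.
  by move=> b /negbTE nbi; rewrite /Q border_mx_max nbi mul0r.
have det_Q : \det Q = (-1) ^+ m.+1 * D i.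
  rewrite det_border_mx (bigD1 i) //= big1 ?addr0; first by rewrite eqxx mul1r.
  by move=> b /negbTE nbi; rewrite nbi mul0r.
have adjQX : (\adj Q *m (Q *m X)) l 0 = \det Q * x l.
  by rewrite mulmxA mul_adj_mx mul_scalar_mx !mxE.
rewrite mxE (bigD1_ord ord_max) //= QX_max [X in X * x i]mxE cofactor_border_mx in adjQX.
have -> : D i * x l - D l * x i
    = (-1) ^+ m.+1 * (\det Q * x l - (-1) ^+ m.+1 * D l * x i).
  by rewrite det_Q -!mulrA -mulrBr signrMK.
rewrite -adjQX addrC addrK; apply/ideal_gen_mul/ideal_gen_sum => a.
by apply/ideal_gen_mul/ideal_in_gen; exists a; rewrite QX; apply: eq_bigr => b _; rewrite border_mx_lift.
Qed.

Lemma Delta_mul_form_mem i j :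
  ideal_gen (fun p => sel_forms p \/ max_minors p) (D i * \sum_b P j b * x b).
Proof.
rewrite (mul_form_cross_split _ _ D _ (x i)); apply: ideal_gen_add.
  apply: ideal_gen_sum => b; apply: ideal_gen_mul.
  by apply: ideal_in_sub (Delta_cross_sel_forms i b) => p Fp; apply: ideal_in_gen; left.
apply: ideal_gen_mul.
by apply: ideal_in_sub (sum_Delta_row_max_minors j) => p Mp; apply: ideal_in_gen; right.
Qed.

End BorderedMinors.

Definition cross_minors (R : comNzRingType) (n : nat) (x y : 'I_n -> R) : R -> Prop :=
  fun p => exists a b : 'I_n, (a < b)%N /\ p = x a * y b - x b * y a.

Lemma cross_minors_mem (R : comNzRingType) (n : nat) (x y : 'I_n -> R) a b :
  ideal_gen (cross_minors x y) (x a * y b - x b * y a).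
Proof.
have [ab | ba | /val_inj ->] := ltngtP a b.
- by apply: ideal_in_gen; exists a, b.
- by rewrite -opprB; apply/ideal_gen_opp/ideal_in_gen; exists b, a.
- by rewrite subrr; apply: ideal_in_0.
Qed.

Section LocalizedMinors.
Variables (R : idomainType) (N m : nat) (P : 'M[R]_(N, m.+1)) (sel : 'I_m -> 'I_N).
Variables (x : 'I_m.+1 -> R) (L : 'I_N -> R) (D : 'I_m.+1 -> R) (i : 'I_m.+1).
Hypotheses (LE : forall j, L j = \sum_b P j b * x b) (DE : forall l, D l = Delta P sel l).
Hypothesis D_neq0 : D i != 0.

Lemma loc_sel_forms_cross_minors (z : {fraction R}) :
  loc_ideal (D i) (fun p => exists a, p = L (sel a)) z <-> loc_ideal (D i) (cross_minors x D) z.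
Proof.
have cross_sel l : ideal_gen (fun p => exists a, p = L (sel a)) (D i * x l - D l * x i).
  rewrite !DE; apply: ideal_in_sub (Delta_cross_sel_forms P sel x i l) => _ [a ->].
  by apply: ideal_in_gen; exists a; rewrite LE.
split; apply: ideal_in_sub => _ [g Gg ->]; apply: loc_ideal_tofrac_mull => //.
- case: Gg => a ->; rewrite LE (mul_form_cross_split _ _ D _ (x i)).
  have -> : \sum_b P (sel a) b * D b = 0.
    by rewrite -[RHS](sum_Delta_sel_row P sel a); apply: eq_bigr => b _; rewrite DE.
  rewrite mulr0 addr0; apply: ideal_gen_sum => b.
  by apply: ideal_gen_mul; rewrite [D i * _]mulrC [D b * _]mulrC; apply: cross_minors_mem.
- case: Gg => a [b [_ ->]].
  have -> : D i * (x a * D b - x b * D a)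
      = D b * (D i * x a - D a * x i) - D a * (D i * x b - D b * x i) by ring.
  by apply: ideal_gen_sub; apply: ideal_gen_mul.
Qed.

End LocalizedMinors.

Lemma Delta_map_mx (R S : comNzRingType) (g : {rmorphism R -> S}) (N n : nat)
    (Th : 'M[R]_(N, n)) (sel : 'I_n.-1 -> 'I_N) (i : 'I_n) :
  Delta (map_mx g Th) sel i = g (Delta Th sel i).
Proof.
rewrite /Delta rmorphM rmorphXn rmorphN1 -det_map_mx.
by congr (_ * \det _); apply/matrixP => a b; rewrite !mxE.
Qed.

Lemma max_minors_map_mx (R S : comNzRingType) (g : {rmorphism R -> S}) (N m : nat)
    (Th : 'M[R]_(N, m.+1)) p :
  max_minors (map_mx g Th) p -> exists2 q, minors_ideal Th q & p = g q.
Proof.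
case=> s s_inj ->; exists (\det (\matrix_(a, b) Th (s a) b)).
  by apply: ideal_in_gen; exists s.
by rewrite -det_map_mx; congr (\det _); apply/matrixP => a b; rewrite !mxE.
Qed.

Section SymmetricAlgebra.
Variables (k : fieldType) (n r : nat).

Lemma bilin_comb (N : nat) (A : 'I_N -> 'I_r -> {mpoly k[n]}) (a : 'I_r -> {mpoly k[n]})
    (c : 'I_N -> {mpoly k[n]}) :
  (forall l, a l = \sum_j c j * A j l) -> bilin a = \sum_j toBX r (c j) * bilin (A j).
Proof.
move=> ca; rewrite /bilin.
have e l : toBX r (a l) * ('X_l : {mpoly k[r]})%:MP
    = \sum_j toBX r (c j) * (toBX r (A j l) * ('X_l : {mpoly k[r]})%:MP).
  rewrite ca /toBX rmorph_sum mulr_suml.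
  by apply: eq_bigr => j _; rewrite rmorphM mulrA.
rewrite [LHS](eq_bigr _ (fun l _ => e l)) [LHS]exchange_big.
by apply: eq_bigr => j _; rewrite [RHS]mulr_sumr.
Qed.

Lemma sym_ideal_sub_bilin (N : nat) (f : 'I_r -> {mpoly k[n]}) (A : 'I_N -> 'I_r -> {mpoly k[n]}) z :
  gens_syz f A -> sym_ideal f z -> ideal_gen (fun p => exists j, p = bilin (A j)) z.
Proof.
case=> _ genA; apply: ideal_in_sub => _ [a [syz_a _] ->].
have [c ca] := genA a syz_a; rewrite (bilin_comb ca).
by apply: ideal_gen_sum => j; apply/ideal_gen_mul/ideal_in_gen; exists j.
Qed.

End SymmetricAlgebra.

(* Instantiating the lemma above at this ring only changes its statement up to
   conversion of the idomainType and comNzRingType structures of the nested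
   polynomial ring; the elaborator needs minutes to check that conversion, the
   kernel seconds, so the check is left to the kernel. *)
Lemma loc_sel_forms_cross_minors_mpoly (k : fieldType) (r N m : nat)
    (P : 'M[{mpoly {mpoly k[r]}[m.+1]}]_(N, m.+1)) (sel : 'I_m -> 'I_N)
    (L : 'I_N -> {mpoly {mpoly k[r]}[m.+1]}) (D : 'I_m.+1 -> {mpoly {mpoly k[r]}[m.+1]})
    (i : 'I_m.+1) :
  (forall j, L j = \sum_b P j b * 'X_b) -> (forall l, D l = Delta P sel l) -> D i != 0 ->
  forall z : {fraction {mpoly {mpoly k[r]}[m.+1]}},
    loc_ideal (D i) (fun p => exists a, p = L (sel a)) z
    <-> loc_ideal (D i) (fun p => exists a b : 'I_m.+1, (a < b)%N /\ p = 'X_a * D b - 'X_b * D a) z.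
Proof. exact_no_check (@loc_sel_forms_cross_minors _ N m P sel (fun l => 'X_l) L D i). Qed.

Theorem corollary2p10
  (k : fieldType) (n r N : nat)
  (f : 'I_r -> {mpoly k[n]})
  (A : 'I_N -> 'I_r -> {mpoly k[n]})
  (L : 'I_N -> {mpoly {mpoly k[r]}[n]})
  (Theta : 'M[{mpoly k[r]}]_(N, n))
  (sel : 'I_n.-1 -> 'I_N) (i : 'I_n) :
  linearly_presented f ->
  m_primary (ideal_gen (fun p => exists j : 'I_r, p = f j)) ->
  (forall j, linear_syzygy f (A j)) ->
  min_gens_syz f A ->
  (forall j, L j = bilin (A j)) ->
  (forall j l, Theta j l \is 1.-homog) ->
  (forall j, \sum_(l < n) (Theta j l)%:MP * 'X_l = L j) ->
  Delta Theta sel i != 0 ->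
  (forall z, sym_ideal f z ->
     ideal_gen (fun p => (exists a, p = L (sel a)) \/
                         exists2 q, minors_ideal Theta q & p = q%:MP)
               ((Delta Theta sel i)%:MP * z))
  /\
  (forall z : {fraction {mpoly {mpoly k[r]}[n]}},
     loc_ideal (Delta Theta sel i)%:MP (fun p => exists a, p = L (sel a)) z
     <->
     loc_ideal (Delta Theta sel i)%:MP
       (fun p => exists a b : 'I_n, (a < b)%N /\
          p = 'X_a * (Delta Theta sel b)%:MP - 'X_b * (Delta Theta sel a)%:MP) z).
Proof.
move=> _ _ _ [genA _] LA _ ThetaL Delta_neq0.
case: n f A L Theta sel i genA LA ThetaL Delta_neq0 => [|m] f A L Theta sel i; first by case: i.
move=> genA LA ThetaL Delta_neq0.
pose P := map_mx (@mpolyC m.+1 {mpoly k[r]}) Theta.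
have DeltaP l : (Delta Theta sel l)%:MP = Delta P sel l by rewrite /P Delta_map_mx.
have LP j : L j = \sum_b P j b * 'X_b.
  by rewrite -ThetaL; apply: eq_bigr => b _; rewrite /P mxE.
split.
  move=> z /(sym_ideal_sub_bilin genA); apply: ideal_gen_mul_sub => _ [j ->].
  rewrite -LA [L j]LP [(Delta Theta sel i)%:MP]DeltaP.
  apply: ideal_in_sub (Delta_mul_form_mem P sel (fun l => 'X_l) i j).
  move=> p [[a ->] | /max_minors_map_mx minor_p]; apply: ideal_in_gen.
    by left; exists a; rewrite LP.
  by right.
have DP_neq0 : (Delta Theta sel i)%:MP != 0 :> {mpoly {mpoly k[r]}[m.+1]}.
  by rewrite mpolyC_eq0.
exact: loc_sel_forms_cross_minors_mpoly LP DeltaP DP_neq0.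
Qed.
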